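(* Let $e$ be the environment assigning to every type variable the relation $=_{\beta\eta}$. Then: (1) for every $\forall^+$ type $P$, $\llbracket P\rrbracket_e \subseteq\ =_{\beta\eta}$ (i.e. $t\,\llbracket P\rrbracket_e\,t'$ implies $t=_{\beta\eta}t'$); (2) for every $\forall^-$ type $N$, $=_{\beta\eta}\ \subseteq \llbracket N\rrbracket_e$ (i.e. $t=_{\beta\eta}t'$ implies $t\,\llbracket N\rrbracket_e\,t'$).
   Context: Terms are those of the pure untyped $\lambda$-calculus, $t ::= x \mid \lambda x.t \mid t\,t'$, up to $\alpha$-equivalence; $=_{\beta\eta}$ is $\beta\eta$-convertibility. Relational types are given by $R ::= X \mid R\to R' \mid \forall X.R \mid R^{\cup} \mid R\cdot R' \mid t$, where $X$ ranges over type variables and the last form is the promotion of a term $t$ to a type. A binary relation $r$ on terms is $\beta\eta$-closed if $t_1\,r\,t_2$, $t_1'=_{\beta\eta}t_1$, $t_2'=_{\beta\eta}t_2$ imply $t_1'\,r\,t_2'$; $\mathcal{R}$ is the set of such relations. An environment $\gamma$ maps type variables to elements of $\mathcal{R}$; $\gamma[X\mapsto r]$ is its update. The interpretation (written $t\,\llbracket R\rrbracket_\gamma\,t'$ for membership) is: $\llbracket X\rrbracket_\gamma=\gamma(X)$; $t\,\llbracket R\to R'\rrbracket_\gamma\,t'$ iff for all $a,a'$ with $a\,\llbracket R\rrbracket_\gamma\,a'$ we have $t\,a\,\llbracket R'\rrbracket_\gamma\,t'\,a'$; $\llbracket \forall X.R\rrbracket_\gamma=\bigcap_{r\in\mathcal{R}}\llbracket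 R\rrbracket_{\gamma[X\mapsto r]}$; $t\,\llbracket R^\cup\rrbracket_\gamma\,t'$ iff $t'\,\llbracket R\rrbracket_\gamma\,t$; $t\,\llbracket R\cdot R'\rrbracket_\gamma\,t'$ iff there is $t''$ with $t\,\llbracket R\rrbracket_\gamma\,t''$ and $t''\,\llbracket R'\rrbracket_\gamma\,t'$; $\llbracket \hat t\rrbracket_\gamma=\{(t,t')\mid \hat t\,t=_{\beta\eta}t'\}$ for a promoted term $\hat t$. Polarities are $p\in\{+,-\}$, with $\bar p$ the other polarity. The property $\forall^p$ of types is defined inductively: every type variable is $\forall^p$; if $R$ is $\forall^{\bar p}$ and $R'$ is $\forall^p$ then $R\to R'$ is $\forall^p$; if $R$ is $\forall^+$ then $\forall X.R$ is $\forall^+$; if $R$ is $\forall^p$ then $R^\cup$ is $\forall^p$; the promotion of a term $t$ with $t=_{\beta\eta}\lambda x.x$ is $\forall^p$ (no other types are $\forall^p$). *)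

From Stdlib Require Import Arith Relations.

Inductive tm : Type :=
| var : nat -> tm
| lam : tm -> tm
| app : tm -> tm -> tm.

Fixpoint lift (d c : nat) (t : tm) : tm :=
  match t with
  | var n => if n <? c then var n else var (n + d)
  | lam b => lam (lift d (S c) b)
  | app u v => app (lift d c u) (lift d c v)
  end.

Fixpoint subst (j : nat) (s : tm) (t : tm) : tm :=
  match t with
  | var n => if n =? j then s else if j <? n then var (pred n) else var n
  | lam b => lam (subst (S j) (lift 1 0 s) b)
  | app u v => app (subst j s u) (subst j s v)
  end.

Inductive step : tm -> tm -> Prop :=
| step_beta : forall b u, step (app (lam b) u) (subst 0 u b)
| step_eta : forall t, step (lam (app (lift 1 0 t) (var 0))) t
| step_lam : forall b b', step b b' -> step (lam b) (lam b')
| step_appl : forall u u' v, step u u' -> step (app u v) (app u' v)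
| step_appr : forall u v v', step v v' -> step (app u v) (app u v').

Definition bconv : tm -> tm -> Prop := clos_refl_sym_trans tm step.

Definition rel := tm -> tm -> Prop.

Definition bclosed (r : rel) : Prop :=
  forall t1 t2 t1' t2', r t1 t2 -> bconv t1' t1 -> bconv t2' t2 -> r t1' t2'.

Inductive rtype : Type :=
| TVar : nat -> rtype
| Arr : rtype -> rtype -> rtype
| All : nat -> rtype -> rtype
| Conv : rtype -> rtype
| Comp : rtype -> rtype -> rtype
| Prom : tm -> rtype.

Definition env := nat -> rel.

Definition upd (g : env) (X : nat) (r : rel) : env :=
  fun Y => if Y =? X then r else g Y.

Fixpoint interp (g : env) (R : rtype) : rel :=
  match R with
  | TVar X => g X
  | Arr R1 R2 => fun t t' =>
      forall a a', interp g R1 a a' -> interp g R2 (app t a) (app t' a')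
  | All X R1 => fun t t' =>
      forall r : rel, bclosed r -> interp (upd g X r) R1 t t'
  | Conv R1 => fun t t' => interp g R1 t' t
  | Comp R1 R2 => fun t t' =>
      exists t'', interp g R1 t t'' /\ interp g R2 t'' t'
  | Prom s => fun t t' => bconv (app s t) t'
  end.

Inductive pol : Type := Pos | Neg.

Definition opp (p : pol) : pol := match p with Pos => Neg | Neg => Pos end.

Inductive forallp : pol -> rtype -> Prop :=
| fp_var : forall p X, forallp p (TVar X)
| fp_arr : forall p R R', forallp (opp p) R -> forallp p R' -> forallp p (Arr R R')
| fp_all : forall X R, forallp Pos R -> forallp Pos (All X R)
| fp_conv : forall p R, forallp p R -> forallp p (Conv R)
| fp_prom : forall p t, bconv t (lam (var 0)) -> forallp p (Prom t).

Definition e_bconv : env := fun _ => bconv.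

From Stdlib Require Import Arith Relations Lia.

(* Both halves are proved together by induction on the derivation of [forall^p], for any
   environment sending every type variable to [=βη]; instantiating a positive [forall] with
   [=βη] keeps the environment of that shape.  The only non-structural case is a positive
   arrow: [t [[R -> R']] t'] gives [t a =βη t' a] for every [a], and this extensional
   equality implies [t =βη t'] by taking for [a] a variable free in neither term and
   eta-contracting. *)

Ltac index_cases :=
  repeat first
    [ match goal with
      | |- context [?a <? ?b] => destruct (Nat.ltb_spec a b)
      | |- context [?a =? ?b] => destruct (Nat.eqb_spec a b)
      end
    | progress simpl ];
  subst; try (f_equal; lia); try lia; try reflexivity.

Lemma lift_lift_comm (t : tm) (d j c : nat) : j <= c ->
  lift d (S c) (lift 1 j t) = lift 1 j (lift d c t).
Proof.
  revert j c; induction t; intros j c Hjc; simpl.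
  - index_cases.
  - f_equal; apply IHt; lia.
  - f_equal; auto.
Qed.

Lemma lift_subst_below (t s : tm) (d c j : nat) : c <= j ->
  lift d c (subst j s t) = subst (j + d) (lift d c s) (lift d c t).
Proof.
  revert c j s; induction t; intros c j s Hcj; simpl.
  - index_cases.
  - rewrite IHt by lia. rewrite <- lift_lift_comm by lia. reflexivity.
  - f_equal; auto.
Qed.

Lemma lift_subst_above (t s : tm) (d c j : nat) : j <= c ->
  lift d c (subst j s t) = subst j (lift d c s) (lift d (S c) t).
Proof.
  revert c j s; induction t; intros c j s Hjc; simpl.
  - index_cases.
  - rewrite IHt by lia. rewrite lift_lift_comm by lia. reflexivity.
  - f_equal; auto.
Qed.

Lemma subst_lift (t w : tm) (i : nat) : subst i w (lift 1 i t) = t.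
Proof.
  revert i w; induction t; intros i w; simpl.
  - index_cases.
  - f_equal; auto.
  - f_equal; auto.
Qed.

Lemma subst_subst (b s u : tm) (i j : nat) : i <= j ->
  subst j s (subst i u b) = subst i (subst j s u) (subst (S j) (lift 1 i s) b).
Proof.
  revert i j s u; induction b; intros i j s u Hij; simpl.
  - index_cases; symmetry; apply subst_lift.
  - rewrite IHb by lia. rewrite lift_subst_below, lift_lift_comm by lia.
    do 3 f_equal; lia.
  - f_equal; auto.
Qed.

Lemma step_lift (u v : tm) (d c : nat) : step u v -> step (lift d c u) (lift d c v).
Proof.
  intros Huv; revert d c; induction Huv; intros d c; simpl.
  - rewrite lift_subst_above by lia. constructor.
  - rewrite lift_lift_comm by lia. constructor.
  - constructor; auto.
  - constructor; auto.
  - constructor; auto.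
Qed.

Lemma step_subst (u v s : tm) (j : nat) : step u v -> step (subst j s u) (subst j s v).
Proof.
  intros Huv; revert j s; induction Huv; intros j s; simpl.
  - rewrite subst_subst by lia. constructor.
  - replace (subst (S j) (lift 1 0 s) (lift 1 0 t)) with (lift 1 0 (subst j s t)).
    + constructor.
    + rewrite lift_subst_below by lia. f_equal; lia.
  - constructor; auto.
  - constructor; auto.
  - constructor; auto.
Qed.

Lemma bconv_congr (f : tm -> tm) :
  (forall u v, step u v -> step (f u) (f v)) ->
  forall u v, bconv u v -> bconv (f u) (f v).
Proof.
  intros Hf u v Huv; induction Huv.
  - apply rst_step; auto.
  - apply rst_refl.
  - apply rst_sym; auto.
  - eapply rst_trans; eauto.
Qed.

Lemma bconv_app (u u' v v' : tm) :
  bconv u u' -> bconv v v' -> bconv (app u v) (app u' v').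
Proof.
  intros Hu Hv; apply rst_trans with (app u' v).
  - apply (bconv_congr (fun x => app x v)); auto using step_appl.
  - apply (bconv_congr (app u')); auto using step_appr.
Qed.

Lemma bconv_bclosed : bclosed bconv.
Proof.
  intros t1 t2 t1' t2' H12 H1 H2.
  apply rst_trans with t1; [exact H1|].
  apply rst_trans with t2; [exact H12|].
  apply rst_sym; exact H2.
Qed.

Fixpoint free_below (n : nat) (t : tm) : Prop :=
  match t with
  | var k => k < n
  | lam b => free_below (S n) b
  | app u v => free_below n u /\ free_below n v
  end.

Lemma free_below_mono (t : tm) (n m : nat) :
  free_below n t -> n <= m -> free_below m t.
Proof.
  revert n m; induction t as [k | b IHt | u IHu v IHv]; simpl; intros n m Ht Hnm.
  - lia.
  - apply (IHt (S n)); auto; lia.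
  - destruct Ht; split; eauto.
Qed.

Lemma free_below_exists (t : tm) : exists n, free_below n t.
Proof.
  induction t as [k | b [n Hb] | u [n Hu] v [m Hv]]; simpl.
  - exists (S k); lia.
  - exists n; apply (free_below_mono b n); auto.
  - exists (n + m); split; eapply free_below_mono; eauto; lia.
Qed.

Lemma free_below_lift (t : tm) (n d c : nat) :
  free_below n t -> free_below (n + d) (lift d c t).
Proof.
  revert n c; induction t as [k | b IHt | u IHu v IHv]; simpl; intros n c Ht.
  - index_cases.
  - apply (IHt (S n)); auto.
  - destruct Ht; split; auto.
Qed.

Lemma subst_free_below (t s : tm) (n j : nat) :
  free_below n t -> n <= j -> subst j s t = t.
Proof.
  revert n j s; induction t as [k | b IHt | u IHu v IHv]; simpl; intros n j s Ht Hnj.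
  - index_cases.
  - f_equal; eapply IHt; eauto; lia.
  - destruct Ht; f_equal; eauto.
Qed.

Lemma bconv_ext (t t' : tm) :
  (forall a, bconv (app t a) (app t' a)) -> bconv t t'.
Proof.
  intros Hext.
  destruct (free_below_exists t) as [n1 Ht], (free_below_exists t') as [n2 Ht'].
  set (n := n1 + n2).
  (* Send the fresh variable [var n] to index 0 under a new binder. *)
  set (rename := fun x => subst (S n) (var 0) (lift 1 0 x)).
  assert (Hrename : forall x, free_below n x -> rename x = lift 1 0 x).
  { intros x Hx; apply (subst_free_below _ _ (n + 1)); [apply free_below_lift; exact Hx | lia]. }
  assert (Happ : bconv (app (lift 1 0 t) (var 0)) (app (lift 1 0 t') (var 0))).
  { specialize (Hext (var n)).
    apply (bconv_congr rename) in Hext;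
      [| intros u v Huv; apply step_subst, step_lift, Huv].
    rewrite <- !Hrename by (eapply free_below_mono; eauto; lia).
    unfold rename in *; simpl in *.
    replace (n + 1 =? S n) with true in Hext by (symmetry; apply Nat.eqb_eq; lia).
    exact Hext. }
  apply (bconv_congr lam) in Happ; [| exact step_lam].
  apply rst_trans with (lam (app (lift 1 0 t) (var 0))); [apply rst_sym, rst_step, step_eta|].
  apply rst_trans with (lam (app (lift 1 0 t') (var 0))); [exact Happ|].
  apply rst_step, step_eta.
Qed.

Lemma bconv_app_id (t u : tm) : bconv t (lam (var 0)) -> bconv (app t u) u.
Proof.
  intros Ht; apply rst_trans with (app (lam (var 0)) u).
  - apply bconv_app; [exact Ht | apply rst_refl].
  - apply rst_step, (step_beta (var 0) u).
Qed.

Definition pol_incl (p : pol) (r : rel) : Prop :=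
  match p with
  | Pos => forall t t', r t t' -> bconv t t'
  | Neg => forall t t', bconv t t' -> r t t'
  end.

Lemma interp_pol_incl (p : pol) (R : rtype) : forallp p R ->
  forall g : env, (forall X, g X = bconv) -> pol_incl p (interp g R).
Proof.
  intros HR; induction HR as [p X | p R R' _ IHR _ IHR' | X R _ IHR | p R _ IHR | p s Hs];
    intros g Hg.
  - destruct p; simpl; rewrite Hg; auto.
  - specialize (IHR g Hg); specialize (IHR' g Hg).
    destruct p; simpl in *.
    + intros t t' Ht; apply bconv_ext; intros a.
      apply IHR', Ht, IHR, rst_refl.
    + intros t t' Ht a a' Ha; apply IHR', bconv_app; auto.
  - simpl; intros t t' Ht.
    apply (IHR (upd g X bconv)); [| exact (Ht bconv bconv_bclosed)].
    intros Y; unfold upd; destruct (Y =? X); auto.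
  - specialize (IHR g Hg); destruct p; simpl in *; intros t t' Ht.
    + apply rst_sym, IHR, Ht.
    + apply IHR, rst_sym, Ht.
  - destruct p; simpl; intros u u' Hu.
    + apply rst_trans with (app s u); [apply rst_sym, bconv_app_id, Hs | exact Hu].
    + apply rst_trans with u; [apply bconv_app_id, Hs | exact Hu].
Qed.

Theorem mainTheorem1 :
  (forall P : rtype, forallp Pos P ->
     forall t t' : tm, interp e_bconv P t t' -> bconv t t') /\
  (forall N : rtype, forallp Neg N ->
     forall t t' : tm, bconv t t' -> interp e_bconv N t t').
Proof.
  split; intros R HR; exact (interp_pol_incl _ R HR e_bconv (fun _ => eq_refl)).
Qed.
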